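(* Let $G$ be a second countable locally compact abelian group, $\varLambda\subseteq G$ uniformly discrete, $\mathcal{A}=(A_n)_n$ a van Hove sequence, and $F_n=\varLambda\cap A_n$. (a) If the density autocorrelation $\gamma_{\mathrm{dens}}$ of $\varLambda$ exists with respect to $\mathcal{A}$, then the density $\mathrm{dens}_{\mathcal{A}}(\varLambda)=\lim_n\frac{\mathrm{card}(F_n)}{\mathrm{vol}(A_n)}$ exists and $\gamma_{\mathrm{dens}}(\{0\})=\mathrm{dens}_{\mathcal{A}}(\varLambda)$. (b) If the counting autocorrelation $\gamma_{\mathrm{count}}$ exists with respect to $\mathcal{A}$, then the following are equivalent: (i) $\gamma_{\mathrm{count}}(\{0\})=1$; (ii) $(F_n)_n$ contains a subsequence of nonempty sets; (iii) there exists $N$ such that $F_n\ne\emptyset$ for all $n>N$; (iv) $\gamma_{\mathrm{count}}\ne0$.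
   Context: $\mathrm{vol}$ is Haar measure. Uniformly discrete: there is a nonempty open $U$ such that each $t+U$ meets $\varLambda$ in at most one point. A van Hove sequence is a sequence of compact sets $A_n$ of positive Haar measure with $\mathrm{vol}(\partial^K A_n)/\mathrm{vol}(A_n)\to0$ for all compact $K$, where $\partial^K A=((A+K)\setminus A^\circ)\cup((\overline{G\setminus A}-K)\cap A)$. For finite $F$, $\gamma_F=\frac{1}{\mathrm{card}(F)}\sum_{x,y\in F}\delta_{x-y}$ if $F\ne\emptyset$, $\gamma_\emptyset=0$; $\gamma_n=\frac{1}{\mathrm{vol}(A_n)}\sum_{x,y\in F_n}\delta_{x-y}$. The density (resp. counting) autocorrelation is the vague limit of $\gamma_n$ (resp. $\gamma_{F_n}$). *)

From HB Require Import structures.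
From mathcomp Require Import all_boot all_algebra.
From mathcomp Require Import finmap all_classical all_reals all_analysis.
Set Implicit Arguments. Unset Strict Implicit. Unset Printing Implicit Defensive.
Import GRing.Theory Num.Theory numFieldTopology.Exports numFieldNormedType.Exports.
Local Open Scope classical_set_scope.
Local Open Scope ring_scope.

(* Carrier of an abelian topological group; the (arbitrary) point is only
   needed so that the Borel sigma-algebra gives a measurableType. *)
Definition ptd (G : topologicalZmodType) : Type := G.
HB.instance Definition _ (G : topologicalZmodType) := Choice.on (ptd G).
HB.instance Definition _ (G : topologicalZmodType) :=
  isPointed.Build (ptd G) 0.
Definition borel_open (G : topologicalZmodType) : set (set (ptd G)) :=
  @open G.

Notation borel G := (g_sigma_algebraType (@borel_open G)).

Section Defs.
Context {R : realType} {G : topologicalZmodType}.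

Definition haar_measure (vol : {measure set (borel G) -> \bar R}) :=
  [/\ forall (B : set G) (t : G), measurable (B : set (borel G)) ->
        vol ([set t + b | b in B] : set (borel G)) = vol B,
      forall K : set G, compact K -> (vol K < +oo)%E &
      forall U : set G, open U -> U !=set0 -> (0 < vol U)%E].

Definition locally_finite (mu : {measure set (borel G) -> \bar R}) :=
  forall K : set G, compact K -> (mu K < +oo)%E.

Definition uniformly_discrete (L : set G) :=
  exists U : set G, [/\ open U, U !=set0 &
    forall (t x y : G), L x -> L y ->
      [set t + u | u in U] x -> [set t + u | u in U] y -> x = y].

Definition setadd (A K : set G) : set G := [set a + k | a in A & k in K].
Definition setsub (A K : set G) : set G := [set a - k | a in A & k in K].

Definition kboundary (K A : set G) : set G :=
  (setadd A K `\` interior A) `|` (setsub (closure (~` A)) K `&` A).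

Definition van_hove (vol : {measure set (borel G) -> \bar R})
    (A : nat -> set G) :=
  (forall n, compact (A n) /\ (0 < vol (A n))%E) /\
  (forall K : set G, compact K ->
     (fine (vol (kboundary K (A n))) / fine (vol (A n))) @[n --> \oo] --> 0).

Definition cardR (F : set G) : R := (#|` fset_set F |)%fset%:R.

Definition Cc (f : G -> R) :=
  continuous f /\ exists K : set G, compact K /\ forall x, ~ K x -> f x = 0.

(* pairing of f with gamma_n = 1/vol(A_n) sum_{x,y in F_n} delta_{x-y} *)
Definition gamma_dens (vol : {measure set (borel G) -> \bar R})
    (L : set G) (A : nat -> set G) (n : nat) (f : G -> R) : R :=
  (\sum_(x \in L `&` A n) \sum_(y \in L `&` A n) f (x - y)) / fine (vol (A n)).

(* pairing of f with gamma_{F_n}; gamma_emptyset = 0 *)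
Definition gamma_count (L : set G) (A : nat -> set G) (n : nat)
    (f : G -> R) : R :=
  if asbool (L `&` A n = set0) then 0 else
  (\sum_(x \in L `&` A n) \sum_(y \in L `&` A n) f (x - y)) / cardR (L `&` A n).

(* vague convergence of the sequence of measures (given by their pairings
   with test functions) to the Borel measure gamma *)
Definition vague_limit (gn : nat -> (G -> R) -> R)
    (gamma : {measure set (borel G) -> \bar R}) :=
  forall f : G -> R, Cc f ->
    ((gn n f)%:E) @[n --> \oo] --> (\int[gamma]_x (f x)%:E)%E.

End Defs.

From HB Require Import structures.
From mathcomp Require Import all_boot all_algebra.
From mathcomp Require Import finmap all_classical all_reals all_analysis.
From mathcomp Require Import lra measurable_realfun.
Set Implicit Arguments. Unset Strict Implicit. Unset Printing Implicit Defensive.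
Import mathcomp.order.order.Order.TTheory GRing.Theory Num.Theory.
Import numFieldTopology.Exports numFieldNormedType.Exports.
Local Open Scope classical_set_scope.
Local Open Scope ring_scope.

(* Uniform discreteness gives an open W containing 0 with
   (L - L) `&` W = [set 0], and local compactness a compactly supported
   continuous bump g with 0 <= g <= 1, g 0 = 1 and support in W. Then
   gamma_n(g) = card F_n / vol A_n, resp. gamma_{F_n}(g) = [F_n != set0],
   whereas every test function supported in W minus 0 pairs to 0 with every
   gamma_n. So the vague limit gamma gives no mass to the open set W minus 0
   (second countability turns "locally null" into "null"), and
   gamma {0} = \int g d gamma = lim gamma_n(g). For (b), the
   0/1-valued sequence gamma_{F_n}(g) converges, hence is eventually
   constant: either F_n is eventually nonempty and gamma {0} = 1, or F_n is
   eventually empty, gamma_{F_n} = 0 eventually and gamma = 0. *)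

Section bump_functions.
Context {R : realType} {G : topologicalZmodType}.
Hypotheses (hG : hausdorff_space G) (lcG : locally_compact [set: G]).

Lemma Cc_bump (t : G) (O : set G) : open O -> O t ->
  exists h : G -> R, [/\ Cc h, forall x, 0 <= h x <= 1, h t = 1 &
    forall x, h x != 0 -> O x].
Proof.
move=> oO Ot; have [C Ct [cC _]] := lcG (I : [set: G] t).
rewrite withinET in Ct.
have crG := @locally_compact_completely_regular G R lcG hG.
have clB : closed (~` (O `&` interior C)).
  by apply/open_closedC/openI => //; exact: open_interior.
have nBt : ~ (~` (O `&` interior C)) t by move=> /(_ (conj Ot Ct)).
have /(@uniform_separatorP _ R) [f [cf f01 f0 f1]] := crG _ _ clB nBt.
exists (fun x => 1 - f x); split.
- split; first by move=> x; apply: continuousB; [exact: cvg_cst|exact: cf].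
  exists C; split => // x Cx; apply/eqP; rewrite subr_eq0 eq_sym; apply/eqP.
  by apply: f1; exists x => // -[_ /interior_subset].
- move=> x; have : `[0, 1]%classic (f x) by apply: f01; exists x.
  by rewrite /= in_itv /= => /andP[? ?]; apply/andP; split; lra.
- by rewrite (f0 (f t)) ?subr0 //; exists t.
- move=> x; rewrite subr_eq0 => /eqP fx1; apply: contrapT => Ox.
  by apply: fx1; rewrite (f1 (f x)) //; exists x => // -[].
Qed.

End bump_functions.

Section borel_measurability.
Context {R : realType} {G : topologicalZmodType}.

Lemma open_measurable_borel (O : set G) : open O -> measurable (O : set (borel G)).
Proof. by move=> oO; apply: sub_sigma_algebra. Qed.

Lemma closed_measurable_borel (C : set G) :
  closed C -> measurable (C : set (borel G)).
Proof.
move=> cC; rewrite -[C]setCK; apply: measurableC.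
by apply: open_measurable_borel; exact: closed_openC.
Qed.

Lemma continuous_measurable_borel (h : G -> R) : continuous h ->
  measurable_fun [set: borel G] (EFin \o (h : borel G -> R)).
Proof.
move=> ch; apply/measurable_EFinP.
apply: (measurability _ (RGenOpens.measurableE R)) => _ [_ [a [b ->] <-]].
rewrite setTI; apply: open_measurable_borel; move/continuousP : ch; apply.
exact: interval_open.
Qed.

Lemma continuous_open_gt (h : G -> R) (c : R) : continuous h -> open [set x | c < h x].
Proof.
move=> ch; have -> : [set x | c < h x] = h @^-1` [set y | y \in `]c, +oo[].
  by apply/seteqP; split => x /=; rewrite in_itv /= andbT.
by move/continuousP : ch; apply; exact: interval_open.
Qed.

End borel_measurability.

Section integral_bounds.
Context {R : realType} {G : topologicalZmodType}.
Variable gamma : {measure set (borel G) -> \bar R}.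
Local Open Scope ereal_scope.

Lemma integral_le_measure (h : G -> R) (S : set G) :
  measurable (S : set (borel G)) -> continuous h ->
  (forall x, (0 <= h x <= 1)%R) -> (forall x, h x != 0%R -> S x) ->
  \int[gamma]_x (h x)%:E <= gamma S.
Proof.
move=> mS ch h01 hS; rewrite -[S in gamma S]setIT -integral_indic //.
apply: ge0_le_integral => //.
- by move=> x _; rewrite lee_fin; case/andP: (h01 x).
- exact: continuous_measurable_borel.
- by apply/measurable_EFinP; exact: measurable_indic.
move=> x _; rewrite lee_fin /indic.
have [->|/hS Sx] := eqVneq (h x) 0%R; first by case: (_ \in _).
by rewrite mem_set //; case/andP: (h01 x).
Qed.

Lemma measure_le_integral (h : G -> R) (S : set G) (c : R) :
  measurable (S : set (borel G)) -> continuous h -> (0 <= c)%R ->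
  (forall x, (0 <= h x)%R) -> (forall x, S x -> (c <= h x)%R) ->
  c%:E * gamma S <= \int[gamma]_x (h x)%:E.
Proof.
move=> mS ch c0 h0 hS.
have mI : measurable_fun [set: borel G] (EFin \o (\1_S : borel G -> R)).
  by apply/measurable_EFinP; exact: measurable_indic.
rewrite -[S in gamma S]setIT -integral_indic //.
rewrite -(ge0_integralZl gamma measurableT mI); last 2 first.
- by move=> x _; rewrite lee_fin.
- by rewrite lee_fin.
apply: ge0_le_integral => //.
- by move=> x _; rewrite -EFinM lee_fin mulr_ge0.
- exact: measurable_funeM.
- exact: continuous_measurable_borel.
move=> x _; rewrite -EFinM lee_fin /indic.
have [Sx|nSx] := pselect (S x); first by rewrite mem_set // mulr1; exact: hS.
by rewrite memNset // mulr0.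
Qed.

End integral_bounds.

Section null_open_sets.
Context {R : realType} {G : topologicalZmodType}.
Hypotheses (hG : hausdorff_space G) (lcG : locally_compact [set: G]).
Hypothesis scG : @second_countable G.
Variable gamma : {measure set (borel G) -> \bar R}.

(* By second countability, countably many null basic open sets cover O. *)
Lemma locally_null_open (O : set G) :
  (forall t, O t -> exists V : set G, [/\ open V, V t & gamma V = 0%E]) ->
  gamma.-negligible (O : set (borel G)).
Proof.
move=> Onull; have [B cB [_ Bbase]] := scG.
pose B' := [set b | B b /\ gamma.-negligible (b : set (borel G))].
have OB' : O `<=` \bigcup_(b in B') b.
  move=> t /Onull[V [oV Vt gV]].
  have [U [BU Ut] UV] := Bbase t V (open_nbhs_nbhs (conj oV Vt)).
  exists U => //; split => //; exists V; split => //.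
  exact: open_measurable_borel.
have cB' : countable B' by apply: sub_countable cB; apply: subset_card_le => b [].
have /pfcard_geP[B'0|[f]] := cB'.
  apply: (negligibleS _ (negligible_set0 gamma)).
  by rewrite B'0 bigcup_set0 in OB'.
have fnull n : gamma.-negligible (f n : set (borel G)).
  by have [] := @funS _ _ _ _ f n I.
apply: (negligibleS _ (negligible_bigcup fnull)).
by move=> t /OB'[b /(@surj _ _ _ _ f)[n _ <-] bt]; exists n.
Qed.

Lemma Cc_null_open (O : set G) : open O ->
  (forall h : G -> R, Cc h -> (forall x, 0 <= h x <= 1) ->
    (forall x, h x != 0 -> O x) -> (\int[gamma]_x (h x)%:E = 0)%E) ->
  gamma O = 0%E.
Proof.
move=> oO hint; apply: measure_negligible; first exact: open_measurable_borel.
apply: locally_null_open => t Ot.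
have [h [Ch h01 ht1 hO]] := Cc_bump (R := R) hG lcG oO Ot.
have ch : continuous h by case: Ch.
set V := [set x | 1/2 < h x]; have oV : open V := continuous_open_gt _ ch.
exists V; split => //; first by rewrite /V /= ht1; lra.
have gV : ((1/2)%:E * gamma V <= 0)%E.
  rewrite -(hint h Ch h01 hO).
  apply: measure_le_integral (open_measurable_borel oV) ch _ _ _.
  - by lra.
  - by move=> x; case/andP: (h01 x).
  - by move=> x /ltW.
apply/eqP; rewrite eq_le measure_ge0 andbT.
by rewrite -(@lee_pmul2l _ (1/2)%:E) ?mule0 // lte_fin; lra.
Qed.

End null_open_sets.

Section vague_limits.
Context {R : realType} {G : topologicalZmodType}.
Hypotheses (hG : hausdorff_space G) (lcG : locally_compact [set: G]).
Hypothesis scG : @second_countable G.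
Variables (gn : nat -> (G -> R) -> R) (gamma : {measure set (borel G) -> \bar R}).
Hypothesis gn_gamma : vague_limit gn gamma.

Lemma vague_limit_null_open (O : set G) : open O ->
  (forall h : G -> R, Cc h -> (forall x, h x != 0 -> O x) ->
    \forall n \near \oo, gn n h = 0) ->
  gamma O = 0%E.
Proof.
move=> oO gnO; apply: (Cc_null_open hG lcG scG) => // h Ch _ hO.
have gn0 : (fun n => (gn n h)%:E) @ \oo --> (0 : \bar R).
  by apply: cvg_near_cst; apply: filterS (gnO h Ch hO) => n ->.
exact: cvg_unique (gn_gamma Ch) gn0.
Qed.

Lemma measurable_set10 : measurable (([set 0] : set G) : set (borel G)).
Proof.
by apply: closed_measurable_borel; apply/accessible_closed_set1/hausdorff_accessible.
Qed.

Lemma integral_bump_atom (W : set G) (g : G -> R) : open W -> continuous g ->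
  (forall x, 0 <= g x <= 1) -> g 0 = 1 -> (forall x, g x != 0 -> W x) ->
  gamma (W `\` [set 0]) = 0%E ->
  (\int[gamma]_x (g x)%:E)%E = gamma ([set 0] : set G).
Proof.
move=> oW cg g01 g0 gW gW0; have mW := open_measurable_borel oW.
apply/eqP; rewrite eq_le; apply/andP; split.
  apply: (le_trans (integral_le_measure gamma mW cg g01 gW)).
  rewrite (measureDI gamma mW measurable_set10) -[X in (_ <= X)%E]add0e.
  apply: leeD; first by rewrite -gW0; exact: lexx.
  apply: le_measure; rewrite ?inE; last exact: subIsetr.
  - exact: measurableI measurable_set10.
  - exact: measurable_set10.
rewrite -[X in (X <= _)%E]mul1e.
apply: measure_le_integral measurable_set10 cg _ _ _ => //.
- by move=> x; case/andP: (g01 x).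
- by move=> x ->; rewrite g0.
Qed.

Lemma vague_limit_atom (W : set G) (g : G -> R) : open W -> Cc g ->
  (forall x, 0 <= g x <= 1) -> g 0 = 1 -> (forall x, g x != 0 -> W x) ->
  locally_finite gamma ->
  (forall n h, (forall x, h x != 0 -> W x /\ x <> 0) -> gn n h = 0) ->
  gamma ([set 0] : set G) \is a fin_num /\
  gn n g @[n --> \oo] --> fine (gamma ([set 0] : set G)).
Proof.
move=> oW Cg g01 g0 gW gamma_lf gn0.
have gW0 : gamma (W `\` [set 0]) = 0%E.
  apply: vague_limit_null_open => [|h _ hW0].
    apply: openI oW (closed_openC _).
    exact/accessible_closed_set1/hausdorff_accessible.
  by apply: nearW => n; exact: gn0.
have fin0 : gamma ([set 0] : set G) \is a fin_num.
  by rewrite ge0_fin_numE ?measure_ge0 //; apply: gamma_lf; exact: compact_set1.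
split => //; have := gn_gamma Cg.
rewrite (integral_bump_atom oW _ g01 g0 gW gW0); last by case: Cg.
by rewrite -(fineK fin0) => /fine_cvgP[].
Qed.

End vague_limits.

(* [compact_cover] is stated for pointed spaces; [ptd G] supplies the point. *)
HB.instance Definition _ (G : topologicalZmodType) := Topological.on (ptd G).

Section uniformly_discrete_sets.
Context {G : topologicalZmodType}.

Lemma continuous_subl (a : G) : continuous (fun z : G => a - z).
Proof.
move=> x; apply: (@continuous_comp _ _ _ (fun z => (a, z))
  (fun p : G * G => p.1 - p.2)).
  by apply: cvg_pair; [exact: cvg_cst|exact: cvg_id].
exact: sub_continuous.
Qed.

Lemma continuous_subr (a : G) : continuous (fun z : G => z - a).
Proof.
move=> x; apply: (@continuous_comp _ _ _ (fun z => (z, a))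
  (fun p : G * G => p.1 - p.2)).
  by apply: cvg_pair; [exact: cvg_id|exact: cvg_cst].
exact: sub_continuous.
Qed.

Lemma open_translate (U : set G) (t : G) : open U -> open [set t + u | u in U].
Proof.
move=> oU; have -> : [set t + u | u in U] = [set z | U (z - t)].
  apply/seteqP; split => z /=; first by move=> [u Uu <-]; rewrite addrC addKr.
  by move=> Uzt; exists (z - t) => //; rewrite addrC subrK.
by move/continuousP : (@continuous_subr t); apply.
Qed.

Lemma uniformly_discrete_compact_finite (L K : set G) :
  uniformly_discrete L -> compact K -> finite_set (L `&` K).
Proof.
move=> [U [oU [u0 Uu0] Ldisc]] cK.
have {cK} : compact (K : set (ptd G)) by [].
rewrite compact_cover => cK.
pose V a := [set a - u0 + u | u in U].
have KV : K `<=` cover K V.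
  by move=> a Ka; exists a => //; exists u0 => //; rewrite subrK.
have [D _ KD] := cK G K V (fun a _ => open_translate _ oU) KV.
apply: (@sub_finite_set _ _ (\bigcup_(a in [set` D]) (L `&` V a))).
  by move=> x [Lx /KD[a Da Vax]]; exists a.
apply: bigcup_finite => [|a _]; first exact: finite_fset.
have [[x0 [Lx0 Vx0]]|noL] := pselect (exists x0, (L `&` V a) x0).
  apply: (@sub_finite_set _ _ [set x0]); last exact: finite_set1.
  by move=> x [Lx Vx]; exact: Ldisc Lx Lx0 Vx Vx0.
by apply: (@sub_finite_set _ _ set0) => // x LVx; apply: noL; exists x.
Qed.

Lemma uniformly_discrete_nbhs0 (L : set G) : uniformly_discrete L ->
  exists2 W : set G, open W /\ W 0 &
    forall x y, L x -> L y -> W (x - y) -> x = y.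
Proof.
move=> [U [oU [u0 Uu0] Ldisc]]; exists [set z | U (u0 - z)].
  split; last by rewrite /= subr0.
  by move/continuousP : (@continuous_subl u0); apply.
move=> x y Lx Ly Wxy; apply: (Ldisc (x - u0) x y Lx Ly).
  by exists u0 => //; rewrite subrK.
by exists (u0 - (x - y)) => //; rewrite addrA subrK subKr.
Qed.

End uniformly_discrete_sets.

Section autocorrelation_sums.
Context {R : realType} {G : topologicalZmodType}.
Variables (L W : set G).
Hypothesis L_sep : forall x y, L x -> L y -> W (x - y) -> x = y.

Lemma autocorr_sum_punctured (B : set G) (h : G -> R) :
  (forall x, h x != 0 -> W x /\ x <> 0) ->
  \sum_(x \in L `&` B) \sum_(y \in L `&` B) h (x - y) = 0.
Proof.
move=> hW; apply: fsbig1 => x [Lx _]; apply: fsbig1 => y [Ly _].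
have [//|/hW[Wxy xy0]] := eqVneq (h (x - y)) 0.
by case: xy0; rewrite (L_sep Lx Ly Wxy) subrr.
Qed.

Lemma autocorr_sum_bump (B : set G) (g : G -> R) : finite_set (L `&` B) ->
  g 0 = 1 -> (forall x, g x != 0 -> W x) ->
  \sum_(x \in L `&` B) \sum_(y \in L `&` B) g (x - y) = cardR (L `&` B).
Proof.
move=> finF g0 gW; rewrite (eq_fsbigr (fun _ => 1)); last first.
  move=> x /set_mem[Lx Bx]; rewrite (fsbigD1 x) // subrr g0 fsbig1 /= ?addr0 //.
  move=> y [[Ly _] /= yx]; have [//|/gW Wxy] := eqVneq (g (x - y)) 0.
  by case: yx; rewrite (L_sep Lx Ly Wxy).
by rewrite fsbig_finite // /cardR -sum1_size natr_sum.
Qed.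

Variable A : nat -> set G.

Lemma gamma_dens_punctured (vol : {measure set (borel G) -> \bar R}) n
    (h : G -> R) :
  (forall x, h x != 0 -> W x /\ x <> 0) -> gamma_dens vol L A n h = 0.
Proof. by move=> hW; rewrite /gamma_dens autocorr_sum_punctured // mul0r. Qed.

Lemma gamma_count_punctured n (h : G -> R) :
  (forall x, h x != 0 -> W x /\ x <> 0) -> gamma_count L A n h = 0.
Proof.
by move=> hW; rewrite /gamma_count autocorr_sum_punctured // mul0r; case: ifP.
Qed.

Variable g : G -> R.
Hypotheses (g0 : g 0 = 1) (gW : forall x, g x != 0 -> W x).

Lemma gamma_dens_bump (vol : {measure set (borel G) -> \bar R}) n :
  finite_set (L `&` A n) ->
  gamma_dens vol L A n g = cardR (L `&` A n) / fine (vol (A n)).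
Proof. by move=> finF; rewrite /gamma_dens autocorr_sum_bump. Qed.

Lemma gamma_count_bump n : finite_set (L `&` A n) ->
  gamma_count L A n g = `[< L `&` A n !=set0 >]%:R.
Proof.
move=> finF; rewrite /gamma_count.
case: asboolP => [F0|F0]; first by rewrite asboolF // F0 => -[].
rewrite asboolT; last by apply/set0P/eqP.
rewrite autocorr_sum_bump // divff // /cardR pnatr_eq0 cardfs_eq0.
by apply/negP => /eqP/(fset_set_set0 finF).
Qed.

End autocorrelation_sums.

Lemma cvg01_eventually_cst (R : realType) (u : nat -> R) (r : R) :
  (forall n, u n = 0 \/ u n = 1) -> u @ \oo --> r ->
  (r = 0 \/ r = 1) /\ \forall n \near \oo, u n = r.
Proof.
move=> u01 ur; have half : 0 < 1/2 :> R by lra.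
have [N _ uNr] := cvgr_dist_lt _ _ ur _ half.
have uN n : (N <= n)%N -> u n = u N.
  move=> Nn; have := uNr _ Nn; have := uNr _ (leqnn N).
  rewrite !ltr_norml.
  by case: (u01 n) => ->; case: (u01 N) => -> /andP[? ?] /andP[? ?]; lra.
have uuN : u @ \oo --> u N.
  by apply: cvg_near_cst; near=> n; apply: uN; near: n; exact: nbhs_infty_ge.
have ruN : r = u N := cvg_unique (@norm_hausdorff _ R) ur uuN.
split; first by rewrite ruN; exact: u01.
by near=> n; rewrite ruN; apply: uN; near: n; exact: nbhs_infty_ge.
Unshelve. all: by end_near.
Qed.

Lemma vague_limit_count_dichotomy (R : realType) (G : topologicalZmodType)
    (L : set G) (A : nat -> set G) (gamma : {measure set (borel G) -> \bar R}) :
  hausdorff_space G -> locally_compact [set: G] -> @second_countable G ->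
  vague_limit (gamma_count L A) gamma -> gamma ([set 0] : set G) \is a fin_num ->
  (fun n => `[< L `&` A n !=set0 >]%:R) @ \oo --> fine (gamma ([set 0] : set G)) ->
  (gamma ([set 0] : set G) = 1%:E /\ \forall n \near \oo, L `&` A n !=set0) \/
  (gamma [set: G] = 0%E /\ \forall n \near \oo, ~ (L `&` A n !=set0)).
Proof.
move=> hG lcG scG gamma_lim fin0 cvg0.
have bool01 n :
    `[< L `&` A n !=set0 >]%:R = 0 :> R \/ `[< L `&` A n !=set0 >]%:R = 1 :> R.
  by case: asboolP; [right|left].
have [[r0|r1] evr] := cvg01_eventually_cst bool01 cvg0.
  have evF0 : \forall n \near \oo, ~ (L `&` A n !=set0).
    apply: filterS evr => n; rewrite r0.
    by case: asboolP => // _ /eqP; rewrite oner_eq0.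
  right; split => //.
  apply: (vague_limit_null_open hG lcG scG gamma_lim openT) => h _ _.
  apply: filterS evF0 => n F0; rewrite /gamma_count asboolT //.
  by apply/seteqP; split => // x Fx; apply: F0; exists x.
left; split; first by rewrite -(fineK fin0) r1.
apply: filterS evr => n; rewrite r1.
by case: asboolP => // _ /eqP; rewrite eq_sym oner_eq0.
Qed.

Lemma tfae_atom_eventually (R : realType) (G : topologicalZmodType)
    (gamma : {measure set (borel G) -> \bar R}) (P : nat -> Prop) :
  hausdorff_space G ->
  (gamma ([set 0] : set G) = 1%:E /\ \forall n \near \oo, P n) \/
  (gamma [set: G] = 0%E /\ \forall n \near \oo, ~ P n) ->
  [<-> gamma ([set 0] : set G) = 1%:E;
       exists phi : nat -> nat, (forall k, (phi k < phi k.+1)%N) /\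
         (forall k, P (phi k));
       exists N : nat, forall n, (N < n)%N -> P n;
       exists B : set G, measurable (B : set (borel G)) /\ gamma B <> 0%E].
Proof.
move=> hG [[gamma01 [N _ NP]]|[gammaT0 [N _ NnP]]].
  tfae => _.
  - by exists (addn^~ N); split => // k; apply: NP; rewrite /= leq_addl.
  - by exists N => n /ltnW; exact: NP.
  - exists [set 0]; split; first exact: measurable_set10.
    by rewrite gamma01 => /eqP; rewrite eqe oner_eq0.
  - by [].
have gamma0 B : measurable (B : set (borel G)) -> gamma B = 0%E.
  move=> mB; apply/eqP; rewrite eq_le measure_ge0 andbT -gammaT0.
  by apply: le_measure; rewrite ?inE.
tfae.
- by rewrite (gamma0 _ (measurable_set10 hG)) => /eqP; rewrite eqe eq_sym oner_eq0.
- move=> [phi [phi_incr phiP]]; have phi_ge k : (k <= phi k)%N.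
    by elim: k => // k IHk; exact: leq_ltn_trans IHk (phi_incr k).
  by have := NnP _ (phi_ge N) (phiP N).
- move=> [M MP]; have NM : (N <= (maxn M N).+1)%N.
    by rewrite ltnW // ltnS leq_maxr.
  by have := NnP _ NM (MP _ (leq_maxl M N : (M < (maxn M N).+1)%N)).
- by move=> [B [mB]]; rewrite gamma0.
Qed.

Theorem lemma3p8 (R : realType) (G : topologicalZmodType)
  (vol : {measure set (borel G) -> \bar R}) (L : set G) (A : nat -> set G) :
  hausdorff_space G -> locally_compact [set: G] -> @second_countable G ->
  haar_measure vol -> uniformly_discrete L -> van_hove vol A ->
  (forall gamma : {measure set (borel G) -> \bar R},
     locally_finite gamma -> vague_limit (gamma_dens vol L A) gamma ->
     exists d : R,
       (cardR (L `&` A n) / fine (vol (A n))) @[n --> \oo] --> d /\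
       gamma ([set 0] : set G) = d%:E) /\
  (forall gamma : {measure set (borel G) -> \bar R},
     locally_finite gamma -> vague_limit (gamma_count L A) gamma ->
     [<-> gamma ([set 0] : set G) = 1%:E;
          exists phi : nat -> nat, (forall k, (phi k < phi k.+1)%N) /\
            (forall k, L `&` A (phi k) !=set0);
          exists N : nat, forall n, (N < n)%N -> L `&` A n !=set0;
          exists B : set G, measurable (B : set (borel G)) /\ gamma B <> 0%E]).
Proof.
move=> hG lcG scG _ Ldisc [A_cpt _].
have [W [oW W0] Lsep] := uniformly_discrete_nbhs0 Ldisc.
have [g [Cg g01 g0 gW]] := Cc_bump (R := R) hG lcG oW W0.
have finF n : finite_set (L `&` A n).
  exact: uniformly_discrete_compact_finite Ldisc (A_cpt n).1.
split=> gamma gamma_lf gamma_lim.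
  have [fin0 cvg0] := vague_limit_atom hG lcG scG gamma_lim oW Cg g01 g0 gW
    gamma_lf (gamma_dens_punctured Lsep A vol).
  exists (fine (gamma ([set 0] : set G))); split; last by rewrite fineK.
  by under eq_fun do rewrite -(gamma_dens_bump Lsep g0 gW vol (finF _)).
have [fin0 cvg0] := vague_limit_atom hG lcG scG gamma_lim oW Cg g01 g0 gW
  gamma_lf (gamma_count_punctured Lsep A).
apply: (tfae_atom_eventually hG).
apply: (vague_limit_count_dichotomy hG lcG scG gamma_lim fin0).
by under eq_fun do rewrite -(gamma_count_bump Lsep g0 gW (finF _)).
Qed.
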